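(* Let $K$ be a field of characteristic $\neq 2$, let $n\ge 1$, and let $\mathcal C$ be an evolution algebra of a ''chicken'' population (EACP) over $K$ with natural basis $\{h_1,\dots,h_n,r\}$ and structural constants $a_{ij},b_i\in K$ ($i,j=1,\dots,n$). Then $\mathcal C$ is associative if and only if $$\sum_{j=1}^n a_{ij}a_{jk}=0\quad\text{and}\quad b_i=0\qquad\text{for all } i,k=1,\dots,n.$$
   Context: An EACP over a field $K$ (characteristic $\neq 2$) is a $K$-algebra $\mathcal C$ with a basis $\{h_1,\dots,h_n,r\}$ (called a natural basis) whose multiplication is determined by bilinearity from $$h_ir=rh_i=\tfrac12\Big(\sum_{j=1}^n a_{ij}h_j+b_ir\Big),\qquad h_ih_j=0\ (i,j=1,\dots,n),\qquad rr=0,$$ for some constants $a_{ij},b_i\in K$. The $n\times(n+1)$ matrix $M$ whose $i$-th row is $(a_{i1},\dots,a_{in},b_i)$ is called the matrix of structural constants. *)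

From HB Require Import structures.
From mathcomp Require Import all_boot all_order all_algebra.
Set Implicit Arguments. Unset Strict Implicit. Unset Printing Implicit Defensive.
Import Order.TTheory GRing.Theory Num.Theory.
Local Open Scope ring_scope.

(* The EACP with natural basis {h_1,...,h_n, r} is modelled on the coordinate
   space 'rV[K]_(n.+1): the basis vector with index [lift ord_max j] is h_j
   (j : 'I_n) and the basis vector with index [ord_max] is r. *)

Definition eacp_basis (K : fieldType) (n : nat) (p : 'I_n.+1) : 'rV[K]_n.+1 :=
  delta_mx 0 p.

Definition eacp_hr (K : fieldType) (n : nat) (a : 'I_n -> 'I_n -> K)
  (b : 'I_n -> K) (i : 'I_n) : 'rV[K]_n.+1 :=
  2%:R^-1 *: (\sum_(j < n) a i j *: eacp_basis K (lift ord_max j)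
              + b i *: eacp_basis K ord_max).

(* multiplication table on the natural basis:
   h_i r = r h_i as above, h_i h_j = 0, r r = 0 *)
Definition eacp_table (K : fieldType) (n : nat) (a : 'I_n -> 'I_n -> K)
  (b : 'I_n -> K) (p q : 'I_n.+1) : 'rV[K]_n.+1 :=
  match unlift ord_max p, unlift ord_max q with
  | Some i, None => eacp_hr a b i
  | None, Some i => eacp_hr a b i
  | _, _ => 0
  end.

Definition eacp_mul (K : fieldType) (n : nat) (a : 'I_n -> 'I_n -> K)
  (b : 'I_n -> K) (x y : 'rV[K]_n.+1) : 'rV[K]_n.+1 :=
  \sum_(p < n.+1) \sum_(q < n.+1) (x 0 p * y 0 q) *: eacp_table a b p q.

Definition eacp_associative (K : fieldType) (n : nat)
  (a : 'I_n -> 'I_n -> K) (b : 'I_n -> K) : Prop :=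
  forall x y z : 'rV[K]_n.+1,
    eacp_mul a b (eacp_mul a b x y) z = eacp_mul a b x (eacp_mul a b y z).

From HB Require Import structures.
From mathcomp Require Import all_boot all_order all_algebra ring.
Import Order.TTheory GRing.Theory Num.Theory.
Set Implicit Arguments. Unset Strict Implicit. Unset Printing Implicit Defensive.
Local Open Scope ring_scope.

(* Writing x = sum_i x_i h_i + x_r r, the product of x and y is
   sum_i (x_i y_r + x_r y_i) (h_i r), so it is commutative, its r-coordinate is
   1/2 sum_i (x_i y_r + x_r y_i) b_i and its h_k-coordinate is
   1/2 sum_i (x_i y_r + x_r y_i) a_ik.
   If b = 0 and A^2 = 0, every product has r-coordinate 0, hence multiplying it
   by z applies A twice to its h-coordinates: all products of three factors
   vanish, whichever way they are bracketed.  Conversely, associativity applied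
   to (h_i r) r = h_i (r r) = 0 gives A^2 = 0 and applied to
   h_i (h_i r) = (h_i h_i) r = 0 gives b_i^2 = 0. *)

Section EACPMultiplication.
Variables (K : fieldType) (n : nat) (a : 'I_n -> 'I_n -> K) (b : 'I_n -> K).

Local Notation mul := (eacp_mul a b).
Local Notation hr := (eacp_hr a b).
Local Notation h i := (eacp_basis K (lift ord_max i)).
Local Notation r := (eacp_basis K ord_max).

Definition hcoord (x : 'rV[K]_n.+1) (i : 'I_n) : K := x 0 (lift ord_max i).
Definition rcoord (x : 'rV[K]_n.+1) : K := x 0 ord_max.

Definition eacp_coef (x y : 'rV[K]_n.+1) (i : 'I_n) : K :=
  hcoord x i * rcoord y + rcoord x * hcoord y i.

Lemma lift_max_eqF (i : 'I_n) : (lift ord_max i == ord_max) = false.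
Proof. by rewrite eq_sym (negbTE (neq_lift _ _)). Qed.

Lemma hcoord0 i : hcoord 0 i = 0.
Proof. by rewrite /hcoord mxE. Qed.

Lemma rcoord0 : rcoord 0 = 0.
Proof. by rewrite /rcoord mxE. Qed.

Lemma hcoord_h i j : hcoord (h i) j = (i == j)%:R.
Proof. by rewrite /hcoord /eacp_basis mxE eqxx (inj_eq lift_inj) eq_sym. Qed.

Lemma rcoord_h i : rcoord (h i) = 0.
Proof. by rewrite /rcoord /eacp_basis mxE (negbTE (neq_lift _ _)). Qed.

Lemma hcoord_r j : hcoord r j = 0.
Proof. by rewrite /hcoord /eacp_basis mxE eqxx lift_max_eqF. Qed.

Lemma rcoord_r : rcoord r = 1.
Proof. by rewrite /rcoord /eacp_basis mxE !eqxx. Qed.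

Lemma hcoord_hr i k : hcoord (hr i) k = 2%:R^-1 * a i k.
Proof.
rewrite /hcoord /eacp_hr !mxE summxE eqxx lift_max_eqF mulr0 addr0.
congr (_ * _); rewrite (bigD1 k) //= big1 => [|j neq_jk].
  by rewrite !mxE !eqxx mulr1n mulr1 addr0.
by rewrite !mxE eqxx (inj_eq lift_inj) eq_sym (negbTE neq_jk) mulr0.
Qed.

Lemma rcoord_hr i : rcoord (hr i) = 2%:R^-1 * b i.
Proof.
rewrite /rcoord /eacp_hr !mxE summxE !eqxx mulr1n mulr1 big1 ?add0r // => j _.
by rewrite !mxE (negbTE (neq_lift _ _)) mulr0.
Qed.

Lemma eacp_mulE x y : mul x y = \sum_(i < n) eacp_coef x y i *: hr i.
Proof.
rewrite /eacp_mul (bigD1_ord ord_max) //= (bigD1_ord ord_max) //=.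
rewrite /eacp_table unlift_none scaler0 add0r addrC -big_split /=.
apply: eq_bigr => i _; rewrite liftK (bigD1_ord ord_max) //= unlift_none.
rewrite big1 ?addr0 => [|j _]; last by rewrite liftK scaler0.
by rewrite scalerDl.
Qed.

Lemma eacp_mulC x y : mul x y = mul y x.
Proof.
rewrite !eacp_mulE; apply: eq_bigr => i _; congr (_ *: _).
by rewrite /eacp_coef addrC mulrC [rcoord y * _]mulrC.
Qed.

Lemma eacp_mulr0 x : mul x 0 = 0.
Proof.
rewrite eacp_mulE big1 // => i _.
by rewrite /eacp_coef hcoord0 rcoord0 !mulr0 addr0 scale0r.
Qed.

Lemma eacp_mul_r_r : mul r r = 0.
Proof.
rewrite eacp_mulE big1 // => i _.
by rewrite /eacp_coef hcoord_r !(mul0r, mulr0) addr0 scale0r.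
Qed.

Lemma eacp_mul_h_h i j : mul (h i) (h j) = 0.
Proof.
rewrite eacp_mulE big1 // => l _.
by rewrite /eacp_coef !rcoord_h !(mul0r, mulr0) addr0 scale0r.
Qed.

Lemma eacp_coef_h x i j : eacp_coef (h i) x j = (i == j)%:R * rcoord x.
Proof. by rewrite /eacp_coef hcoord_h rcoord_h mul0r addr0. Qed.

Lemma eacp_mul_h_r i : mul (h i) r = hr i.
Proof.
rewrite eacp_mulE (bigD1 i) //= big1 => [|j neq_ji].
  by rewrite eacp_coef_h eqxx rcoord_r mulr1 scale1r addr0.
by rewrite eacp_coef_h eq_sym (negbTE neq_ji) mul0r scale0r.
Qed.

Lemma hcoord_mul x y k :
  hcoord (mul x y) k = 2%:R^-1 * \sum_(i < n) eacp_coef x y i * a i k.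
Proof.
rewrite eacp_mulE /hcoord summxE mulr_sumr; apply: eq_bigr => i _.
by rewrite mxE [_ 0 _]hcoord_hr mulrCA.
Qed.

Lemma rcoord_mul x y :
  rcoord (mul x y) = 2%:R^-1 * \sum_(i < n) eacp_coef x y i * b i.
Proof.
rewrite eacp_mulE /rcoord summxE mulr_sumr; apply: eq_bigr => i _.
by rewrite mxE [_ 0 _]rcoord_hr mulrCA.
Qed.

Lemma hcoord_mul_hr_r i k :
  hcoord (mul (hr i) r) k = 2%:R^-1 * 2%:R^-1 * \sum_(j < n) a i j * a j k.
Proof.
rewrite hcoord_mul -[RHS]mulrA; congr (_ * _).
rewrite mulr_sumr; apply: eq_bigr => j _.
by rewrite /eacp_coef hcoord_r rcoord_r mulr0 addr0 mulr1 hcoord_hr mulrA.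
Qed.

Lemma rcoord_mul_h_hr i : rcoord (mul (h i) (hr i)) = 2%:R^-1 * 2%:R^-1 * b i ^+ 2.
Proof.
rewrite rcoord_mul (bigD1 i) //= big1 => [|j neq_ji].
  by rewrite eacp_coef_h eqxx mul1r rcoord_hr addr0 !mulrA.
by rewrite eacp_coef_h eq_sym (negbTE neq_ji) !mul0r.
Qed.

Lemma eacp_mul3_eq0 (sqA0 : forall i k, \sum_(j < n) a i j * a j k = 0)
    (b0 : forall i, b i = 0) x y z :
  mul (mul x y) z = 0.
Proof.
have rcoord_mul0 u v : rcoord (mul u v) = 0.
  by rewrite rcoord_mul big1 ?mulr0 // => i _; rewrite b0 mulr0.
apply/rowP => p; rewrite mxE; case: (unliftP ord_max p) => [k ->|->].
- rewrite -[_ 0 _]/(hcoord _ k) hcoord_mul.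
  under eq_bigr do rewrite /eacp_coef rcoord_mul0 mul0r addr0 hcoord_mul.
  rewrite (eq_bigr (fun j => \sum_(i < n)
      (2%:R^-1 * rcoord z * eacp_coef x y i) * (a i j * a j k))); last first.
    by move=> j _; rewrite mulr_sumr !mulr_suml; apply: eq_bigr => i _; ring.
  by rewrite exchange_big big1 ?mulr0 // => i _; rewrite -mulr_sumr sqA0 mulr0.
- exact: rcoord_mul0.
Qed.

End EACPMultiplication.

Theorem mainTheorem1 (K : fieldType) (hK : (2%:R : K) != 0) (n : nat)
  (hn : (0 < n)%N) (a : 'I_n -> 'I_n -> K) (b : 'I_n -> K) :
  eacp_associative a b <->
  ((forall i k : 'I_n, \sum_(j < n) a i j * a j k = 0) /\
   (forall i : 'I_n, b i = 0)).
Proof.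
have inv4_neq0 : (2%:R : K)^-1 * 2%:R^-1 != 0 by rewrite mulf_neq0 ?invr_eq0.
split=> [assoc | [sqA0 b0] x y z]; last first.
  by rewrite eacp_mul3_eq0 // eacp_mulC eacp_mul3_eq0.
split=> [i k | i].
- have := assoc (eacp_basis K (lift ord_max i)) (eacp_basis K ord_max)
                (eacp_basis K ord_max).
  rewrite eacp_mul_h_r eacp_mul_r_r eacp_mulr0 => /(congr1 (fun v => hcoord v k)).
  by rewrite hcoord_mul_hr_r hcoord0 => /eqP; rewrite mulf_eq0 (negbTE inv4_neq0) => /eqP.
- have := assoc (eacp_basis K (lift ord_max i)) (eacp_basis K (lift ord_max i))
                (eacp_basis K ord_max).
  rewrite eacp_mul_h_h eacp_mulC eacp_mulr0 eacp_mul_h_r => /(congr1 (@rcoord _ _)).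
  rewrite rcoord_mul_h_hr rcoord0 => /esym/eqP.
  by rewrite mulf_eq0 (negbTE inv4_neq0) expf_eq0 /= => /eqP.
Qed.
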